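(* For all $m = 1,2,\ldots$ and all $r = 0,1,\ldots,m$, the stopping redundancy of the binary Reed–Muller code $\mathcal{R}(r,m)$ satisfies $$\rho(\mathcal{R}(r,m)) \le \sum_{i=0}^{m-r-1} \binom{r+i}{i} 2^i.$$
   Context: The binary Reed–Muller code $\mathcal{R}(r,m)$ of order $r$ and length $2^m$ is the row space of $G(r,m)$, where $G(m,m) = I_{2^m}$, $G(0,m) = (11\cdots1)$, and for $0<r<m$, $G(r,m) = \begin{pmatrix} G(r,m-1) & G(r,m-1) \\ \mathbf{0} & G(r-1,m-1)\end{pmatrix}$; its minimum distance is $2^{m-r}$. A parity-check matrix for a linear code $\mathcal{C}$ is any matrix (possibly with linearly dependent rows) whose rows span $\mathcal{C}^\perp$. For a parity-check matrix $H$, the stopping distance $s(H)$ is the largest integer such that for every set of $s(H)-1$ or fewer columns of $H$, the projection of $H$ onto those columns contains at least one row of Hamming weight exactly one. The stopping redundancy $\rho(\mathcal{C})$ is the smallest number of rows of a parity-check matrix $H$ for $\mathcal{C}$ with $s(H)$ equal to the minimum distance of $\mathcal{C}$. *)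

From mathcomp Require Import all_boot all_order all_algebra.
Set Implicit Arguments. Unset Strict Implicit. Unset Printing Implicit Defensive.
Import GRing.Theory.
Local Open Scope ring_scope.

(* Rows of the generator matrix G(r,m) of the binary Reed-Muller code R(r,m),
   as lists of length 2^m over F_2, following the recursive definition:
   G(m,m) = I, G(0,m) = all-ones row, and for 0<r<m
   G(r,m) = [G(r,m-1) G(r,m-1); 0 G(r-1,m-1)].
   (For r > m, which is never used, we also return the identity.) *)
Definition id_rows (n : nat) : seq (seq 'F_2) :=
  mkseq (fun i => mkseq (fun j => ((i == j) : nat)%:R) n) n.

Fixpoint RM_rows (r m : nat) {struct m} : seq (seq 'F_2) :=
  match m with
  | 0 => id_rows 1
  | m'.+1 =>
      if (m'.+1 <= r)%N then id_rows (2 ^ m'.+1)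
      else match r with
           | 0 => [:: nseq (2 ^ m'.+1) 1]
           | r'.+1 =>
               map (fun g => g ++ g) (RM_rows r m') ++
               map (fun h => nseq (2 ^ m') 0 ++ h) (RM_rows r' m')
           end
  end.

Definition RM_gen (r m : nat) : 'M['F_2]_(size (RM_rows r m), 2 ^ m) :=
  \matrix_(i, j) nth 0 (nth [::] (RM_rows r m) i) j.

Definition wt n (v : 'rV['F_2]_n) : nat := #|[set j | v 0 j != 0]|.

(* Minimum distance of the code given by the row space of G (defaults to n
   if the code has no nonzero codeword, which does not happen here). *)
Definition min_dist k n (G : 'M['F_2]_(k, n)) : nat :=
  \big[minn/n]_(c : 'rV['F_2]_n | (c <= G)%MS && (c != 0)) wt c.

Definition parity_check k n (G : 'M['F_2]_(k, n)) l (H : 'M['F_2]_(l, n)) :=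
  forall v : 'rV['F_2]_n,
    (v <= H)%MS <-> (forall c : 'rV['F_2]_n, (c <= G)%MS -> c *m v^T = 0).

Definition stop_ok l n (H : 'M['F_2]_(l, n)) (s : nat) : Prop :=
  forall S : {set 'I_n}, (0 < #|S|)%N -> (#|S| < s)%N ->
    exists i : 'I_l, #|[set j in S | H i j != 0]| = 1%N.

Definition stopping_distance_is l n (H : 'M['F_2]_(l, n)) (s : nat) : Prop :=
  stop_ok H s /\ ~ stop_ok H s.+1.

Definition stopping_redundancy_le k n (G : 'M['F_2]_(k, n)) (N : nat) : Prop :=
  exists (l : nat) (H : 'M['F_2]_(l, n)),
    (l <= N)%N /\ parity_check G H /\ stopping_distance_is H (min_dist G).

(* Let H(r,m) be empty for m <= r and, for r < m, consist of the rows [b b] for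
   b in H(r-1,m-1) (the single row [u u], u the first unit vector, when r = 0)
   and [a 0], [0 a] for a in H(r,m-1); its number of rows satisfies the
   recursion of the stated sum. Its rows are orthogonal to R(r,m), and by
   induction on m they span the dual code: a vector [x y] orthogonal to R(r,m)
   is [x+y 0] + [y y], where x+y is orthogonal to R(r,m-1) and y to R(r-1,m-1)
   (for r = 0, y or y+u has even weight and [y y] = [u u] + [y+u y+u]).
   Now let S be a nonempty set of fewer than 2^(m-r) positions. If one half of
   S is nonempty and smaller than 2^(m-1-r), a row [a 0] or [0 a] meets S once
   by induction; otherwise S lies in one half and has fewer than 2^(m-r)
   = 2^((m-1)-(r-1)) elements, so a row [b b] meets it once (for r = 0, S is a
   full half and [u u] meets it once). Over F_2 a codeword meets every row of H
   in an even number of positions, so no nonzero codeword has weight below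
   2^(m-r); a row of G(r,m) has weight exactly 2^(m-r), so this is both the
   minimum distance and the stopping distance s(H). *)

From mathcomp Require Import all_boot all_order all_algebra zify.
Set Implicit Arguments. Unset Strict Implicit. Unset Printing Implicit Defensive.
Import GRing.Theory.
Local Open Scope ring_scope.

Lemma F2_0or1 (x : 'F_2) : x = 0 \/ x = 1.
Proof. by case: x => [[|[|k]]] //= lt_k2; [left | right]; apply: val_inj. Qed.

Lemma F2_addrr (x : 'F_2) : x + x = 0.
Proof. exact/addrr_pchar2/pchar_Fp. Qed.

Lemma F2_mul (x y : 'F_2) : x * y = ((x != 0) && (y != 0) : nat)%:R.
Proof.
by case: (F2_0or1 x) => ->; case: (F2_0or1 y) => ->;
  rewrite ?mulr0 ?mul0r ?mulr1 ?oner_eq0 ?eqxx.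
Qed.

Section SeqVectors.

Variable R : comPzRingType.
Implicit Types s t u w : seq R.

Definition vadd s t : seq R := mkseq (fun k => s`_k + t`_k) (size s).

Definition dot n s t : R := \sum_(k < n) s`_k * t`_k.

Lemma size_vadd s t : size (vadd s t) = size s.
Proof. exact: size_mkseq. Qed.

Lemma nth_vadd s t k : size s = size t -> (vadd s t)`_k = s`_k + t`_k.
Proof.
move=> eq_st; have [lt_ks | le_sk] := ltnP k (size s); first by rewrite nth_mkseq.
by rewrite !nth_default ?size_mkseq -?eq_st ?addr0.
Qed.

Lemma vadd0l n t : size t = n -> vadd (nseq n 0) t = t.
Proof.
move=> size_t; apply: (eq_from_nth (x0 := 0)) => [|k _].
  by rewrite size_vadd size_nseq.
by rewrite nth_vadd ?size_nseq // nth_nseq if_same add0r.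
Qed.

Lemma vaddC s t : size s = size t -> vadd s t = vadd t s.
Proof.
move=> eq_st; apply: (eq_from_nth (x0 := 0)) => [|k _]; first by rewrite !size_vadd.
by rewrite !nth_vadd // addrC.
Qed.

Lemma vaddA s t u : size s = size t -> size t = size u ->
  vadd (vadd s t) u = vadd s (vadd t u).
Proof.
move=> eq_st eq_tu; apply: (eq_from_nth (x0 := 0)) => [|k _].
  by rewrite !size_vadd.
by rewrite !nth_vadd ?size_vadd ?eq_st ?eq_tu // addrA.
Qed.

Lemma vadd_cat s1 s2 t1 t2 : size s1 = size t1 -> size s2 = size t2 ->
  vadd (s1 ++ s2) (t1 ++ t2) = vadd s1 t1 ++ vadd s2 t2.
Proof.
move=> eq1 eq2; apply: (eq_from_nth (x0 := 0)) => [|k _].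
  by rewrite size_vadd !size_cat !size_vadd.
rewrite nth_vadd ?size_cat ?eq1 ?eq2 // !nth_cat size_vadd -eq1.
by case: ifP => _; rewrite nth_vadd.
Qed.

Lemma dotC n s t : dot n s t = dot n t s.
Proof. by apply: eq_bigr => k _; rewrite mulrC. Qed.

Lemma dot_cat n1 n2 s1 s2 t1 t2 : size s1 = n1 -> size t1 = n1 ->
  dot (n1 + n2) (s1 ++ s2) (t1 ++ t2) = dot n1 s1 t1 + dot n2 s2 t2.
Proof.
move=> size_s1 size_t1; rewrite /dot big_split_ord /=; congr (_ + _).
  by apply: eq_bigr => k _; rewrite !nth_cat size_s1 size_t1 ltn_ord.
apply: eq_bigr => k _.
by rewrite !nth_cat size_s1 size_t1 ltnNge leq_addr /= addKn.
Qed.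

Lemma dot_vaddl n s t u : size s = size t ->
  dot n (vadd s t) u = dot n s u + dot n t u.
Proof.
move=> eq_st; rewrite /dot -big_split /=; apply: eq_bigr => k _.
by rewrite nth_vadd // mulrDl.
Qed.

Lemma dot_vaddr n s t u : size t = size u ->
  dot n s (vadd t u) = dot n s t + dot n s u.
Proof. by move=> eq_tu; rewrite dotC dot_vaddl // !(dotC n s). Qed.

Lemma dot0l n k t : dot n (nseq k 0) t = 0.
Proof. by rewrite /dot big1 // => i _; rewrite nth_nseq if_same mul0r. Qed.

Lemma dot0r n k s : dot n s (nseq k 0) = 0.
Proof. by rewrite dotC dot0l. Qed.

End SeqVectors.

Lemma vaddK (s t : seq 'F_2) : size s = size t -> vadd (vadd s t) t = s.
Proof.
move=> eq_st; apply: (eq_from_nth (x0 := 0)) => [|k _]; first by rewrite !size_vadd.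
by rewrite !nth_vadd ?size_vadd // -addrA F2_addrr addr0.
Qed.

(* Over 'F_2 sums of generators are exactly linear combinations. *)
Inductive lspan (L : seq (seq 'F_2)) (n : nat) : seq 'F_2 -> Prop :=
| lspan0 : lspan L n (nseq n 0)
| lspanD h v : h \in L -> size h = n -> lspan L n v -> lspan L n (vadd h v).

Section Span.

Variable L : seq (seq 'F_2).
Implicit Types h u v w t : seq 'F_2.

Lemma lspan_size n v : lspan L n v -> size v = n.
Proof. by elim=> [|h w _ size_h _ _]; rewrite ?size_nseq ?size_vadd. Qed.

Lemma lspan_add n u v : lspan L n u -> lspan L n v -> lspan L n (vadd u v).
Proof.
move=> span_u span_v; elim: span_u => [|h w hL size_h span_w IH].
  by rewrite vadd0l // (lspan_size span_v).
by rewrite vaddA ?size_h ?(lspan_size span_w) ?(lspan_size span_v) //; apply: lspanD.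
Qed.

Lemma lspan_mem n h : h \in L -> size h = n -> lspan L n h.
Proof.
move=> hL size_h; have := lspanD hL size_h (lspan0 L n).
by rewrite vaddC ?size_nseq // vadd0l.
Qed.

Lemma lspan_sub L' n v : {subset L <= L'} -> lspan L n v -> lspan L' n v.
Proof.
move=> sLL'; elim=> [|h w hL size_h _ IH]; first exact: lspan0.
by apply: lspanD => //; apply: sLL'.
Qed.

Lemma lspan_map (f : seq 'F_2 -> seq 'F_2) n n' v :
    (forall h, size h = n -> size (f h) = n') ->
    f (nseq n 0) = nseq n' 0 ->
    (forall u w, size u = n -> size w = n -> f (vadd u w) = vadd (f u) (f w)) ->
  lspan L n v -> lspan (map f L) n' (f v).
Proof.
move=> size_f f0 fD; elim=> [|h w hL size_h span_w IH].
  by rewrite f0; apply: lspan0.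
rewrite fD ?(lspan_size span_w) //.
by apply: lspanD => //; [apply: map_f | apply: size_f].
Qed.

Lemma lspan_dup n v :
  lspan L n v -> lspan (map (fun a => a ++ a) L) (n + n) (v ++ v).
Proof.
apply: lspan_map => [h size_h|//|u w size_u size_w].
- by rewrite size_cat size_h.
- by rewrite nseqD.
- by rewrite vadd_cat // size_u size_w.
Qed.

Lemma lspan_padr n k v : lspan L n v ->
  lspan (map (fun a => a ++ nseq k 0) L) (n + k) (v ++ nseq k 0).
Proof.
apply: lspan_map => [h size_h|//|u w size_u size_w].
- by rewrite size_cat size_h size_nseq.
- by rewrite nseqD.
- by rewrite vadd_cat ?size_u ?size_w // vadd0l // size_nseq.
Qed.

Lemma lspan_padl n k v : lspan L n v ->
  lspan (map (fun a => nseq k 0 ++ a) L) (k + n) (nseq k 0 ++ v).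
Proof.
apply: lspan_map => [h size_h|//|u w size_u size_w].
- by rewrite size_cat size_h size_nseq.
- by rewrite nseqD.
- by rewrite vadd_cat ?size_u ?size_w // vadd0l // size_nseq.
Qed.

Lemma dot_lspan n v t :
  (forall g, g \in L -> dot n g t = 0) -> lspan L n v -> dot n v t = 0.
Proof.
move=> dotL0; elim=> [|h w hL size_h span_w IH]; first exact: dot0l.
by rewrite dot_vaddl ?size_h ?(lspan_size span_w) // dotL0 // IH addr0.
Qed.

End Span.

Lemma expnS2 m : (2 ^ m.+1 = 2 ^ m + 2 ^ m)%N.
Proof. by rewrite expnS mul2n -addnn. Qed.

Lemma mkseq_succ (T : Type) (f : nat -> T) n :
  mkseq f n.+1 = f 0%N :: mkseq (fun i => f i.+1) n.
Proof. by rewrite /mkseq /= (iotaDl 1 0 n) -map_comp. Qed.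

Lemma mkseq_const (T : Type) (x : T) n : mkseq (fun=> x) n = nseq n x.
Proof. by elim: n => // n IH; rewrite mkseq_succ IH. Qed.

Lemma id_rowsS n : id_rows n.+1 = (1 :: nseq n 0) :: map (cons 0) (id_rows n).
Proof.
rewrite /id_rows mkseq_succ mkseq_succ mkseq_const /mkseq -map_comp.
by congr (_ :: _); apply: eq_map => i /=; rewrite (iotaDl 1 0 n) -map_comp.
Qed.

Definition unit_row n k : seq 'F_2 := mkseq (fun j => (k == j : nat)%:R) n.

Lemma size_unit_row n k : size (unit_row n k) = n.
Proof. exact: size_mkseq. Qed.

Lemma dot_unit_row n k s : (k < n)%N -> dot n (unit_row n k) s = s`_k.
Proof.
move=> lt_kn; rewrite /dot (bigD1 (Ordinal lt_kn)) //= big1 ?addr0.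
  by rewrite nth_mkseq // eqxx mul1r.
move=> i neq_ik; rewrite nth_mkseq // eq_sym.
by rewrite -[i == k :> nat]/(i == Ordinal lt_kn) (negbTE neq_ik) mul0r.
Qed.

Lemma unit_row_id_rows n k : (k < n)%N -> unit_row n k \in id_rows n.
Proof. by move=> lt_kn; apply: map_f; rewrite mem_iota. Qed.

Lemma size_id_row n g : g \in id_rows n -> size g = n.
Proof. by case/mapP=> i _ ->; rewrite size_mkseq. Qed.

Lemma lspan_id_rows v : lspan (id_rows (size v)) (size v) v.
Proof.
elim: v => [|x v IH]; first exact: (lspan0 _ 0).
have span_0v : lspan (id_rows (size v).+1) (size v).+1 (0 :: v).
  apply: lspan_sub (lspan_padl 1 IH); rewrite id_rowsS => g g_in.
  by rewrite inE g_in orbT.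
case: (F2_0or1 x) => -> //.
have e_in : (1 :: nseq (size v) 0) \in id_rows (size v).+1.
  by rewrite id_rowsS mem_head.
have := lspanD e_in _ span_0v; rewrite /= size_nseq.
by rewrite (@vadd_cat _ [:: 1] _ [:: 0]) ?size_nseq // vadd0l //= addr0; apply.
Qed.

Lemma orthogonal_id_rows n (v : seq 'F_2) : size v = n ->
  (forall g, g \in id_rows n -> dot n g v = 0) -> v = nseq n 0.
Proof.
move=> size_v v_orth; apply: (eq_from_nth (x0 := 0)) => [|k lt_kv].
  by rewrite size_nseq.
have lt_kn : (k < n)%N by rewrite -size_v.
by rewrite nth_nseq if_same -(dot_unit_row v lt_kn) v_orth ?unit_row_id_rows.
Qed.

Lemma size_RM_row r m g : g \in RM_rows r m -> size g = (2 ^ m)%N.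
Proof.
elim: m r g => [|m IH] r g /=; first exact: size_id_row.
case: ifP => _; first exact: size_id_row.
case: r => [|r]; first by rewrite mem_seq1 => /eqP ->; rewrite size_nseq.
rewrite mem_cat expnS2 => /orP[] /mapP[h h_in ->];
  by rewrite size_cat ?size_nseq (IH _ _ h_in).
Qed.

Lemma RM_rows0 m : RM_rows 0 m = [:: nseq (2 ^ m) 1].
Proof. by case: m. Qed.

Lemma RM_rows_full r m : (m <= r)%N -> RM_rows r m = id_rows (2 ^ m).
Proof. by case: m => //= m ->. Qed.

Lemma RM_rows_dup r m g : (r <= m)%N -> g \in RM_rows r m -> g ++ g \in RM_rows r m.+1.
Proof.
move=> le_rm; rewrite /= leqNgt ltnS le_rm /=; case: r le_rm => [|r] _.
  by rewrite RM_rows0 mem_seq1 => /eqP ->; rewrite expnS2 nseqD mem_head.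
by move=> g_in; rewrite mem_cat (map_f (fun g => g ++ g) g_in).
Qed.

Lemma RM_rows_padl r m g : (r < m)%N -> g \in RM_rows r m ->
  nseq (2 ^ m) 0 ++ g \in RM_rows r.+1 m.+1.
Proof.
move=> lt_rm g_in; rewrite /= leqNgt ltnS lt_rm /=.
by rewrite mem_cat (map_f (fun g => nseq _ 0 ++ g) g_in) orbT.
Qed.

Lemma RM_rows_nested r m g : g \in RM_rows r m -> lspan (RM_rows r.+1 m) (2 ^ m) g.
Proof.
elim: m r g => [|m IH] r g g_in; first exact: lspan_mem (size_id_row g_in).
have [le_mr | lt_rm] := leqP m r.
  by rewrite RM_rows_full // -(size_RM_row g_in); apply: lspan_id_rows.
have span_dup h : h \in RM_rows r m ->
    lspan (RM_rows r.+1 m.+1) (2 ^ m + 2 ^ m) (h ++ h).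
  move=> h_in; apply: lspan_sub (lspan_dup (IH _ _ h_in)) => _ /mapP[h' h'_in ->].
  exact: RM_rows_dup.
rewrite /= leqNgt ltnS (ltnW lt_rm) /= in g_in; rewrite expnS2.
case: r lt_rm IH span_dup g_in => [|r] lt_rm IH span_dup g_in.
  rewrite /= mem_seq1 in g_in; rewrite (eqP g_in) expnS2 nseqD.
  by apply: span_dup; rewrite RM_rows0 mem_head.
move: g_in; rewrite mem_cat => /orP[] /mapP[h h_in ->]; first exact: span_dup.
apply: lspan_sub (lspan_padl _ (IH _ _ h_in)) => _ /mapP[h' h'_in ->].
exact: RM_rows_padl.
Qed.

Fixpoint PC_rows (r m : nat) {struct m} : seq (seq 'F_2) :=
  match m with
  | 0 => [::]
  | m'.+1 =>
      if (m'.+1 <= r)%N then [::]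
      else (match r with
            | 0 => [:: unit_row (2 ^ m') 0 ++ unit_row (2 ^ m') 0]
            | r'.+1 => map (fun b => b ++ b) (PC_rows r' m')
            end)
           ++ map (fun a => a ++ nseq (2 ^ m') 0) (PC_rows r m')
           ++ map (fun a => nseq (2 ^ m') 0 ++ a) (PC_rows r m')
  end.

Lemma size_PC_row r m h : h \in PC_rows r m -> size h = (2 ^ m)%N.
Proof.
elim: m r h => [|m IH] r h //=; case: ifP => _ //.
rewrite !mem_cat expnS2 => /orP[|/orP[]].
- case: r => [|r]; first by rewrite mem_seq1 => /eqP ->; rewrite size_cat size_unit_row.
  by case/mapP=> b b_in ->; rewrite size_cat (IH _ _ b_in).
- by case/mapP=> b b_in ->; rewrite size_cat (IH _ _ b_in) size_nseq.
- by case/mapP=> b b_in ->; rewrite size_cat (IH _ _ b_in) size_nseq.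
Qed.

Definition rho_bound r m := (\sum_(0 <= i < m - r) 'C(r + i, i) * 2 ^ i)%N.

Lemma rho_bound0S m : rho_bound 0 m.+1 = (1 + 2 * rho_bound 0 m)%N.
Proof.
rewrite /rho_bound !subn0 big_nat_recl // add0n bin0 expn0 muln1; congr (_ + _)%N.
by rewrite big_distrr /=; apply: eq_big_nat => i _; rewrite !add0n !binn expnS; lia.
Qed.

Lemma rho_boundSS r m : (r < m)%N ->
  rho_bound r.+1 m.+1 = (rho_bound r m + 2 * rho_bound r.+1 m)%N.
Proof.
move=> lt_rm; rewrite /rho_bound subSS.
have -> : (m - r = (m - r.+1).+1)%N by lia.
rewrite !big_nat_recl // !addn0 !bin0 expn0 muln1 -addnA; congr (_ + _)%N.
rewrite big_distrr /= -big_split /=; apply: eq_big_nat => i _.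
by rewrite addnS binS expnS addSn -addnS; lia.
Qed.

Lemma size_PC_rows r m : (r <= m)%N -> size (PC_rows r m) = rho_bound r m.
Proof.
elim: m r => [|m IH] r le_rm.
  by rewrite /rho_bound (_ : r = 0)%N ?big_geq //; lia.
have [le_Sm_r | lt_r_Sm] /= := boolP (m.+1 <= r)%N.
  by rewrite le_Sm_r /rho_bound big_geq //; lia.
rewrite (negbTE lt_r_Sm) !size_cat !size_map IH; last by lia.
case: r le_rm lt_r_Sm => [|r] _ lt_r_m; first by rewrite rho_bound0S /=; lia.
by rewrite size_map IH ?rho_boundSS; lia.
Qed.

Lemma dot_RM_PC r m g h : g \in RM_rows r m -> h \in PC_rows r m ->
  dot (2 ^ m) g h = 0.
Proof.
elim: m r g h => [|m IH] r g h //=; case: ifP => // _; rewrite expnS2.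
case: r => [|r].
  rewrite mem_seq1 => /eqP -> {g}; rewrite nseqD.
  have dot1_PC a : a \in PC_rows 0 m -> dot (2 ^ m) (nseq (2 ^ m) 1) a = 0.
    by apply: IH; rewrite RM_rows0 mem_head.
  rewrite !mem_cat => /orP[|/orP[]].
  - by rewrite mem_seq1 => /eqP ->; rewrite dot_cat ?size_nseq ?size_unit_row // F2_addrr.
  - case/mapP=> a a_in ->; rewrite dot_cat ?size_nseq ?(size_PC_row a_in) //.
    by rewrite (dot1_PC a) // dot0r addr0.
  - case/mapP=> a a_in ->; rewrite dot_cat ?size_nseq ?(size_PC_row a_in) //.
    by rewrite (dot1_PC a) // dot0r add0r.
rewrite !mem_cat => /orP[] /mapP[g' g'_in ->] /orP[|/orP[]] /mapP[a a_in ->];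
  rewrite dot_cat ?size_nseq ?(size_PC_row a_in) ?(size_RM_row g'_in) //.
- by rewrite F2_addrr.
- by rewrite (IH _ _ _ g'_in a_in) dot0r addr0.
- by rewrite (IH _ _ _ g'_in a_in) dot0r add0r.
- by rewrite dot0l (IH _ _ _ g'_in a_in) addr0.
- by rewrite dot0l dot0r addr0.
- rewrite dot0l add0r; apply: dot_lspan (RM_rows_nested g'_in) => g'' g''_in.
  exact: IH g''_in a_in.
Qed.

Section PCRows.

Variables (r m : nat).

Lemma PC_rows_padr h : (r <= m)%N -> h \in PC_rows r m ->
  h ++ nseq (2 ^ m) 0 \in PC_rows r m.+1.
Proof.
move=> le_rm h_in; rewrite /= leqNgt ltnS le_rm /= !mem_cat.
by rewrite (map_f (fun a => a ++ nseq _ 0) h_in) orbT.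
Qed.

Lemma PC_rows_padl h : (r <= m)%N -> h \in PC_rows r m ->
  nseq (2 ^ m) 0 ++ h \in PC_rows r m.+1.
Proof.
move=> le_rm h_in; rewrite /= leqNgt ltnS le_rm /= !mem_cat.
by rewrite (map_f (fun a => nseq _ 0 ++ a) h_in) !orbT.
Qed.

Lemma PC_rows_dup h : (r < m)%N -> h \in PC_rows r m -> h ++ h \in PC_rows r.+1 m.+1.
Proof.
move=> lt_rm h_in; rewrite /= leqNgt ltnS lt_rm /= mem_cat.
by rewrite (map_f (fun b => b ++ b) h_in).
Qed.

Lemma lspan_PC_padr z : (r <= m)%N -> lspan (PC_rows r m) (2 ^ m) z ->
  lspan (PC_rows r m.+1) (2 ^ m.+1) (z ++ nseq (2 ^ m) 0).
Proof.
move=> le_rm span_z; rewrite expnS2.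
by apply: lspan_sub (lspan_padr _ span_z) => _ /mapP[h h_in ->]; apply: PC_rows_padr.
Qed.

Lemma lspan_PC_padl z : (r <= m)%N -> lspan (PC_rows r m) (2 ^ m) z ->
  lspan (PC_rows r m.+1) (2 ^ m.+1) (nseq (2 ^ m) 0 ++ z).
Proof.
move=> le_rm span_z; rewrite expnS2.
by apply: lspan_sub (lspan_padl _ span_z) => _ /mapP[h h_in ->]; apply: PC_rows_padl.
Qed.

Lemma lspan_PC_cat z : (r <= m)%N -> lspan (PC_rows r m) (2 ^ m) z ->
  lspan (PC_rows r m.+1) (2 ^ m.+1) (z ++ z).
Proof.
move=> le_rm span_z; have size_z := lspan_size span_z.
have := lspan_add (lspan_PC_padr le_rm span_z) (lspan_PC_padl le_rm span_z).
by rewrite vadd_cat ?size_nseq // vadd0l // vaddC ?size_nseq // vadd0l.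
Qed.

Lemma lspan_PC_dup z : (r < m)%N -> lspan (PC_rows r m) (2 ^ m) z ->
  lspan (PC_rows r.+1 m.+1) (2 ^ m.+1) (z ++ z).
Proof.
move=> lt_rm span_z; rewrite expnS2.
by apply: lspan_sub (lspan_dup span_z) => _ /mapP[h h_in ->]; apply: PC_rows_dup.
Qed.

End PCRows.

Lemma PC_rows0_unit m :
  unit_row (2 ^ m) 0 ++ unit_row (2 ^ m) 0 \in PC_rows 0 m.+1.
Proof. exact: mem_head. Qed.

Lemma lspan_PC0_dup m y : size y = (2 ^ m)%N ->
    (forall z, size z = (2 ^ m)%N -> dot (2 ^ m) (nseq (2 ^ m) 1) z = 0 ->
       lspan (PC_rows 0 m) (2 ^ m) z) ->
  lspan (PC_rows 0 m.+1) (2 ^ m.+1) (y ++ y).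
Proof.
move=> size_y PC0_dual; pose u := unit_row (2 ^ m) 0.
have size_u : size u = (2 ^ m)%N := size_unit_row _ _.
case: (F2_0or1 (dot (2 ^ m) (nseq (2 ^ m) 1) y)) => [y_even | y_odd].
  exact/lspan_PC_cat/PC0_dual.
have y'_even : dot (2 ^ m) (nseq (2 ^ m) 1) (vadd y u) = 0.
  by rewrite dot_vaddr ?size_u // y_odd dotC dot_unit_row ?expn_gt0 //
    nth_nseq expn_gt0 F2_addrr.
have size_yu : size (vadd y u) = size u by rewrite size_vadd size_y.
have -> : y ++ y = vadd (u ++ u) (vadd y u ++ vadd y u).
  by rewrite vadd_cat ?size_yu // vaddC ?size_yu // vaddK ?size_y.
apply: lspan_add.
  by apply: lspan_mem (PC_rows0_unit m) _; rewrite size_cat size_u expnS2.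
by apply: lspan_PC_cat => //; apply: PC0_dual y'_even; rewrite size_vadd.
Qed.

Lemma lspan_PC_full r m v : (m <= r)%N -> size v = (2 ^ m)%N ->
    (forall g, g \in RM_rows r m -> dot (2 ^ m) g v = 0) ->
  lspan (PC_rows r m) (2 ^ m) v.
Proof.
move=> le_mr size_v v_orth; rewrite (orthogonal_id_rows size_v); first exact: lspan0.
by rewrite -(RM_rows_full le_mr).
Qed.

Lemma lspan_PC_dual r m v : size v = (2 ^ m)%N ->
    (forall g, g \in RM_rows r m -> dot (2 ^ m) g v = 0) ->
  lspan (PC_rows r m) (2 ^ m) v.
Proof.
elim: m r v => [|m IH] r v size_v v_orth; first exact: lspan_PC_full.
have [le_Sm_r | lt_r_Sm] := leqP m.+1 r; first exact: lspan_PC_full.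
have le_rm : (r <= m)%N by rewrite -ltnS.
pose x := take (2 ^ m) v; pose y := drop (2 ^ m) v.
have size_x : size x = (2 ^ m)%N by rewrite size_takel // size_v expnS2 leq_addr.
have size_y : size y = (2 ^ m)%N by rewrite size_drop size_v expnS2 addnK.
have vE : v = x ++ y by rewrite cat_take_drop.
have cat_orth g1 g2 : size g1 = (2 ^ m)%N -> g1 ++ g2 \in RM_rows r m.+1 ->
    dot (2 ^ m) g1 x + dot (2 ^ m) g2 y = 0.
  by move=> size_g1 g_in; rewrite -dot_cat // -vE -expnS2 v_orth.
have span_xy : lspan (PC_rows r m) (2 ^ m) (vadd x y).
  apply: IH => [|g g_in]; first by rewrite size_vadd.
  by rewrite dot_vaddr ?size_x ?size_y // cat_orth ?(size_RM_row g_in) ?RM_rows_dup.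
have span_yy : lspan (PC_rows r m.+1) (2 ^ m.+1) (y ++ y).
  case: r {lt_r_Sm v_orth span_xy} le_rm cat_orth => [|r] le_rm cat_orth.
    apply: lspan_PC0_dup => // z size_z z_orth; apply: IH => // g.
    by rewrite RM_rows0 mem_seq1 => /eqP ->.
  apply: lspan_PC_dup => //; apply: IH => // g g_in.
  have := cat_orth _ _ (size_nseq _ _) (RM_rows_padl le_rm g_in).
  by rewrite dot0l add0r.
have -> : v = vadd (vadd x y ++ nseq (2 ^ m) 0) (y ++ y).
  rewrite vadd_cat ?size_vadd ?size_nseq ?size_x ?size_y //.
  by rewrite vaddK ?size_x ?size_y // vadd0l.
exact: lspan_add (lspan_PC_padr le_rm span_xy) span_yy.
Qed.

Section Hits.

Implicit Types (S : pred nat) (h : seq 'F_2).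

Definition card_below n S := count S (iota 0 n).

Definition hits n S h := count (fun k => S k && (h`_k != 0)) (iota 0 n).

Definition shift n S : pred nat := fun k => S (n + k)%N.

Lemma iota0D n1 n2 : iota 0 (n1 + n2) = iota 0 n1 ++ map (addn n1) (iota 0 n2).
Proof. by rewrite iotaD add0n -iotaDl addn0. Qed.

Lemma card_belowD n1 n2 S :
  card_below (n1 + n2) S = (card_below n1 S + card_below n2 (shift n1 S))%N.
Proof. by rewrite /card_below iota0D count_cat count_map. Qed.

Lemma hits_cat n1 n2 S h1 h2 : size h1 = n1 ->
  hits (n1 + n2) S (h1 ++ h2) = (hits n1 S h1 + hits n2 (shift n1 S) h2)%N.
Proof.
move=> size_h1; rewrite /hits iota0D count_cat count_map; congr (_ + _)%N.
  apply: eq_in_count => k; rewrite mem_iota add0n => /= lt_kn.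
  by rewrite nth_cat size_h1 lt_kn.
by apply: eq_count => k /=; rewrite nth_cat size_h1 ltnNge leq_addr /= addKn.
Qed.

Lemma hits_nseq0 n k S : hits n S (nseq k 0) = 0%N.
Proof.
rewrite /hits (eq_count (a2 := pred0)) ?count_pred0 // => i /=.
by rewrite nth_nseq if_same eqxx andbF.
Qed.

Lemma hits_le n S h : (hits n S h <= card_below n S)%N.
Proof. by apply: sub_count => k /andP[]. Qed.

Lemma card_below_le n S : (card_below n S <= n)%N.
Proof. by rewrite /card_below -[leqRHS](size_iota 0 n) count_size. Qed.

Lemma card_below_eq0 n S k : card_below n S = 0%N -> (k < n)%N -> S k = false.
Proof.
move=> /eqP; rewrite -leqn0 leqNgt -has_count => /hasPn S0 lt_kn.
by apply/negbTE/S0; rewrite mem_iota.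
Qed.

Lemma card_below_full n S k : card_below n S = n -> (k < n)%N -> S k.
Proof.
move=> /eqP; rewrite -[X in _ == X](size_iota 0 n) -all_count => /allP Sn lt_kn.
by apply: Sn; rewrite mem_iota.
Qed.

Lemma hits_unit_row0 n S : (0 < n)%N -> hits n S (unit_row n 0) = S 0%N.
Proof.
case: n => // n _; rewrite /hits /unit_row mkseq_succ mkseq_const /= andbT.
rewrite (eq_in_count (a2 := pred0)) ?count_pred0 ?addn0 // => -[|k].
  by rewrite mem_iota.
by rewrite /= nth_nseq if_same eqxx andbF.
Qed.

End Hits.

Definition single_hit (L : seq (seq 'F_2)) n (S : pred nat) :=
  exists2 h, h \in L & hits n S h = 1%N.

Section SingleHitPC.

Variables (r m : nat) (S : pred nat).
Let n := (2 ^ m)%N.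

Lemma single_hit_padr : (r <= m)%N -> single_hit (PC_rows r m) n S ->
  single_hit (PC_rows r m.+1) (n + n) S.
Proof.
move=> le_rm [h h_in h_hit]; exists (h ++ nseq n 0); first exact: PC_rows_padr.
by rewrite hits_cat ?(size_PC_row h_in) // h_hit hits_nseq0.
Qed.

Lemma single_hit_padl : (r <= m)%N -> single_hit (PC_rows r m) n (shift n S) ->
  single_hit (PC_rows r m.+1) (n + n) S.
Proof.
move=> le_rm [h h_in h_hit]; exists (nseq n 0 ++ h); first exact: PC_rows_padl.
by rewrite hits_cat ?size_nseq // h_hit hits_nseq0.
Qed.

(* If S avoids one half, [b b] meets S where b meets the other half. *)
Lemma single_hit_dup :
    (card_below n (shift n S) = 0%N /\ single_hit (PC_rows r m) n S) \/
    (card_below n S = 0%N /\ single_hit (PC_rows r m) n (shift n S)) ->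
  (r < m)%N -> single_hit (PC_rows r.+1 m.+1) (n + n) S.
Proof.
move=> half_hit lt_rm.
have hits_dup h : size h = n -> hits (n + n) S (h ++ h) =
    (hits n S h + hits n (shift n S) h)%N by move=> size_h; rewrite hits_cat.
case: half_hit => [[empty [h h_in h_hit]] | [empty [h h_in h_hit]]];
  exists (h ++ h); rewrite ?PC_rows_dup // hits_dup ?(size_PC_row h_in) // h_hit.
- by have := hits_le n (shift n S) h; rewrite empty leqn0 => /eqP ->.
- by have := hits_le n S h; rewrite empty leqn0 => /eqP ->.
Qed.

End SingleHitPC.

Lemma single_hit_unit_row m S (n := (2 ^ m)%N) :
    (card_below n S = 0%N /\ card_below n (shift n S) = n) \/
    (card_below n S = n /\ card_below n (shift n S) = 0%N) ->
  single_hit (PC_rows 0 m.+1) (n + n) S.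
Proof.
have n_gt0 : (0 < n)%N by rewrite expn_gt0.
move=> halves; exists (unit_row n 0 ++ unit_row n 0); first exact: PC_rows0_unit.
rewrite hits_cat ?size_unit_row // !hits_unit_row0 //.
case: halves => [[S1 S2] | [S1 S2]].
  by rewrite (card_below_eq0 S1 n_gt0) (card_below_full S2 n_gt0).
by rewrite (card_below_full S1 n_gt0) (card_below_eq0 S2 n_gt0).
Qed.

Lemma PC_rows_single_hit r m S : (0 < card_below (2 ^ m) S < 2 ^ (m - r))%N ->
  single_hit (PC_rows r m) (2 ^ m) S.
Proof.
elim: m r S => [|m IH] r S; first by rewrite sub0n expn0; lia.
have [le_Sm_r | lt_r_Sm] := leqP m.+1 r.
  by rewrite (eqP (le_Sm_r : m.+1 - r == 0)%N) expn0; lia.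
have le_rm : (r <= m)%N by rewrite -ltnS.
rewrite expnS2 card_belowD subSn // expnS2.
set n := (2 ^ m)%N; set c1 := card_below n S; set c2 := card_below n (shift n S).
have c1_le := card_below_le n S; have c2_le := card_below_le n (shift n S).
move=> c_range.
have [c1_range | c1_out] := boolP (0 < c1 < 2 ^ (m - r))%N.
  exact/single_hit_padr/IH.
have [c2_range | c2_out] := boolP (0 < c2 < 2 ^ (m - r))%N.
  exact/single_hit_padl/IH.
case: r {lt_r_Sm} le_rm c_range c1_out c2_out => [|r] le_rm c_range c1_out c2_out.
  by apply: single_hit_unit_row; move: c_range c1_out c2_out; rewrite subn0 -/n; lia.
have d_split : (2 ^ (m - r) = 2 ^ (m - r.+1) + 2 ^ (m - r.+1))%N.
  by rewrite -expnS2 subnSK.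
apply: single_hit_dup le_rm; rewrite -/n -/c1 -/c2.
have [c1_0 | c2_0] : (c2 = 0 \/ c1 = 0)%N by lia.
  by left; split=> //; apply: IH; rewrite -/n -/c1; lia.
by right; split=> //; apply: IH; rewrite -/n -/c2; lia.
Qed.

Lemma RM_rows_min_weight r m :
  exists2 g, g \in RM_rows r m & hits (2 ^ m) predT g = (2 ^ (m - r))%N.
Proof.
have [le_mr | lt_rm] := leqP m r.
  exists (unit_row (2 ^ m) 0).
    by rewrite RM_rows_full // unit_row_id_rows ?expn_gt0.
  by rewrite hits_unit_row0 ?expn_gt0 // (eqP (le_mr : m - r == 0)%N).
elim: m r lt_rm => [//|m IH] [_ | r lt_rm].
  exists (nseq (2 ^ m.+1) 1); first by rewrite RM_rows0 mem_head.
  rewrite subn0 /hits (eq_in_count (a2 := predT)) ?count_predT ?size_iota // => k.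
  by rewrite mem_iota /= => lt_k; rewrite nth_nseq lt_k oner_eq0.
have [g g_in g_wt] := IH r lt_rm.
exists (nseq (2 ^ m) 0 ++ g); first exact: RM_rows_padl.
by rewrite expnS2 hits_cat ?size_nseq // hits_nseq0 g_wt subSS.
Qed.

Section StoppingDistance.

Variables (k n l : nat) (G : 'M['F_2]_(k, n)) (H : 'M['F_2]_(l, n)).
Hypothesis GH : parity_check G H.

Lemma mulmx_tr_card (c v : 'rV['F_2]_n) :
  (c *m v^T) 0 0 = #|[set j | (c 0 j != 0) && (v 0 j != 0)]|%:R.
Proof.
rewrite mxE -sum1_card natr_sum [RHS]big_mkcond /=; apply: eq_bigr => j _.
by rewrite !mxE F2_mul inE; case: ifP.
Qed.

Lemma codeword_no_single_hit (c : 'rV['F_2]_n) i : (c <= G)%MS ->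
  #|[set j | (c 0 j != 0) && (H i j != 0)]| != 1%N.
Proof.
move=> cG; apply/eqP => single.
have := (GH (row i H)).1 (row_sub i H) c cG.
move/matrixP => /(_ 0 0); rewrite mulmx_tr_card mxE.
rewrite (eq_card (B := [set j | (c 0 j != 0) && (H i j != 0)])) ?single ?oner_eq0 //.
by move=> j; rewrite !inE mxE.
Qed.

Lemma stop_ok_wt s (c : 'rV['F_2]_n) :
  stop_ok H s -> (c <= G)%MS -> c != 0 -> (s <= wt c)%N.
Proof.
move=> stop cG c_neq0; rewrite leqNgt; apply/negP => wt_lt.
have wt_gt0 : (0 < wt c)%N.
  rewrite lt0n cards_eq0; apply: contra c_neq0 => /eqP supp0.
  apply/eqP/rowP => j; have : j \notin [set j | c 0 j != 0] by rewrite supp0 inE.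
  by rewrite inE negbK mxE => /eqP.
have [i single] := stop _ wt_gt0 wt_lt.
have supp_eq : [set j in [set j | c 0 j != 0] | H i j != 0] =
               [set j | (c 0 j != 0) && (H i j != 0)] by apply/setP => j; rewrite !inE.
by move: (codeword_no_single_hit i cG); rewrite -supp_eq single.
Qed.

Lemma stopping_distance_min_dist (c : 'rV['F_2]_n) :
  stop_ok H (wt c) -> (c <= G)%MS -> c != 0 -> stopping_distance_is H (min_dist G).
Proof.
move=> stop cG c_neq0.
have -> : min_dist G = wt c.
  apply/eqP; rewrite eqn_leq; apply/andP; split.
    by apply: (@Order.TotalTheory.bigmin_le_cond _ nat); rewrite cG c_neq0.
  apply: (@Order.POrderTheory.le_bigmin _ nat).
    exact: leq_trans (max_card _) (eq_leq (card_ord n)).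
  by move=> c' /andP[c'G c'_neq0]; apply: stop_ok_wt.
by split=> // stopS; move: (stop_ok_wt stopS cG c_neq0); rewrite ltnn.
Qed.

End StoppingDistance.

Section SeqMatrices.

Variable n : nat.
Implicit Types (L : seq (seq 'F_2)) (s h : seq 'F_2) (v : 'rV['F_2]_n).

Definition mat_of L : 'M['F_2]_(size L, n) := \matrix_(i, j) (nth [::] L i)`_j.

Definition rv_of s : 'rV['F_2]_n := \row_j s`_j.

Definition seq_of v : seq 'F_2 := [seq v 0 j | j <- enum 'I_n].

Lemma size_seq_of v : size (seq_of v) = n.
Proof. by rewrite size_map size_enum_ord. Qed.

Lemma rv_of_seq_of v : rv_of (seq_of v) = v.
Proof.
apply/rowP => j; rewrite mxE /seq_of (nth_map j) ?size_enum_ord //.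
by rewrite nth_ord_enum.
Qed.

Lemma row_mat_of L i : row i (mat_of L) = rv_of (nth [::] L i).
Proof. by apply/rowP => j; rewrite !mxE. Qed.

Lemma rv_of_submx L h : h \in L -> (rv_of h <= mat_of L)%MS.
Proof.
move=> hL; have lt_idx : (index h L < size L)%N by rewrite index_mem.
by rewrite -(nth_index [::] hL) -(row_mat_of (Ordinal lt_idx)) row_sub.
Qed.

Lemma lspan_submx L s : lspan L n s -> (rv_of s <= mat_of L)%MS.
Proof.
elim=> [|h w hL size_h span_w IH].
  suff -> : rv_of (nseq n 0) = 0 by apply: sub0mx.
  by apply/rowP => j; rewrite !mxE nth_nseq if_same.
have -> : rv_of (vadd h w) = rv_of h + rv_of w.
  by apply/rowP => j; rewrite !mxE nth_vadd // size_h (lspan_size span_w).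
by rewrite addmx_sub // rv_of_submx.
Qed.

Lemma mul_mat_of_tr L1 L2 i j :
  (mat_of L1 *m (mat_of L2)^T) i j = dot n (nth [::] L1 i) (nth [::] L2 j).
Proof. by rewrite mxE; apply: eq_bigr => k _; rewrite !mxE. Qed.

Lemma mulmx_tr_dot s v : (rv_of s *m v^T) 0 0 = dot n s (seq_of v).
Proof.
rewrite mxE; apply: eq_bigr => j _.
by rewrite !mxE /seq_of (nth_map j) ?size_enum_ord // nth_ord_enum.
Qed.

Lemma card_ord_count (q : pred nat) :
  #|[set j : 'I_n | q j]| = count q (iota 0 n).
Proof.
rewrite -val_enum_ord count_map cardE /enum_mem size_filter /= -enumT.
rewrite (@eq_filter _ _ predT) // filter_predT.
by apply: eq_count => j; rewrite /= inE.
Qed.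

Lemma wt_rv_of h : wt (rv_of h) = hits n predT h.
Proof. by rewrite /wt /hits -card_ord_count; apply: eq_card => j; rewrite !inE mxE. Qed.

Lemma wt0 : wt (0 : 'rV['F_2]_n) = 0%N.
Proof.
by apply/eqP; rewrite cards_eq0; apply/eqP/setP => j; rewrite !inE mxE eqxx.
Qed.

Lemma parity_check_mat_of GL HL :
    (forall g h, g \in GL -> h \in HL -> dot n g h = 0) ->
    (forall s, size s = n -> (forall g, g \in GL -> dot n g s = 0) -> lspan HL n s) ->
  parity_check (mat_of GL) (mat_of HL).
Proof.
move=> orth dual v; split.
  have GH0 : mat_of GL *m (mat_of HL)^T = 0.
    by apply/matrixP => i j; rewrite mul_mat_of_tr mxE orth ?mem_nth.
  case/submxP=> w -> c /submxP[u ->].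
  by rewrite trmx_mul mulmxA -(mulmxA u) GH0 mulmx0 mul0mx.
move=> v_orth; rewrite -(rv_of_seq_of v); apply/lspan_submx/dual => [|g gL].
  exact: size_seq_of.
have := v_orth _ (rv_of_submx gL); move/matrixP => /(_ 0 0).
by rewrite mulmx_tr_dot mxE.
Qed.

Lemma stop_ok_mat_of HL d :
    (forall S : pred nat, (0 < card_below n S < d)%N -> single_hit HL n S) ->
  stop_ok (mat_of HL) d.
Proof.
move=> single S S_gt0 S_lt; pose q : pred nat := mem (map val (enum S)).
have qE (j : 'I_n) : q j = (j \in S) by rewrite /q /= mem_map ?mem_enum //; apply: val_inj.
have [|h hL h_hit] := single q.
  by rewrite /card_below -card_ord_count (eq_card (B := S)) ?S_gt0 ?S_lt // => j;
    rewrite inE qE.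
have lt_idx : (index h HL < size HL)%N by rewrite index_mem.
exists (Ordinal lt_idx); rewrite -[RHS]h_hit /hits -card_ord_count.
by apply: eq_card => j; rewrite !inE qE mxE /= nth_index.
Qed.

End SeqMatrices.

Theorem theorem14 (m r : nat) :
  (1 <= m)%N -> (r <= m)%N ->
  stopping_redundancy_le (RM_gen r m)
    (\sum_(0 <= i < m - r) 'C(r + i, i) * 2 ^ i)%N.
Proof.
move=> _ le_rm; pose H := mat_of (2 ^ m) (PC_rows r m).
have GH : parity_check (RM_gen r m) H.
  exact: parity_check_mat_of (@dot_RM_PC r m) (@lspan_PC_dual r m).
have [g g_in g_wt] := RM_rows_min_weight r m.
have wt_g : wt (rv_of (2 ^ m) g) = (2 ^ (m - r))%N by rewrite wt_rv_of.
exists (size (PC_rows r m)), H; split; first by rewrite size_PC_rows.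
split=> //; apply: (stopping_distance_min_dist GH (c := rv_of _ g)).
- by rewrite wt_g; apply: stop_ok_mat_of => S; apply: PC_rows_single_hit.
- exact: rv_of_submx.
- by apply/eqP => g0; move: (expn_gt0 2 (m - r)); rewrite -wt_g g0 wt0.
Qed.
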